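(* The category $\boxplus$ is a generalized Reedy category with $\boxplus^-$ the wide subcategory of surjective $\boxplus$-morphisms, $\boxplus^+$ the wide subcategory of injective $\boxplus$-morphisms, and $\deg([1]^n)=n$ for $n=0,1,2,\dots$.
   Context: $[1]=\{0<1\}$, $[1]^n$ the product poset ($[1]^0=[0]$). An interval in a poset is a non-empty subset $[x,z]=\{y:x\leq y\leq z\}$. $\boxplus$ is the category whose objects are the $[1]^n$ ($n\geq0$) and whose morphisms are the monotone functions mapping every interval onto an interval. A generalized Reedy category is a small category $\mathcal{S}$ with wide subcategories $\mathcal{S}^-,\mathcal{S}^+$ and a function $\deg$ from objects to $\mathbb{N}$ such that: (i) $\mathcal{S}^-\cap\mathcal{S}^+$ is the core (groupoid of isomorphisms) of $\mathcal{S}$; (ii) for each $\mathcal{S}^-$-morphism $o_1\to o_2$, $\deg(o_1)\geq\deg(o_2)$; (iii) for each $\mathcal{S}^+$-morphism $o_1\to o_2$, $\deg(o_1)\leq\deg(o_2)$; (iv) a morphism $o_1\to o_2$ in $\mathcal{S}^-$ or $\mathcal{S}^+$ lies in both if $\deg(o_1)=\deg(o_2)$; (v) for each $\mathcal{S}^-$-morphism $\zeta$, an isomorphism $\gamma$ with $\gamma\zeta=\zeta$ is an identity; (vi) every $\mathcal{S}$-morphism factors as an $\mathcal{S}^-$-morphism followed by an $\mathcal{S}^+$-morphism, uniquely up to isomorphism. *)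

From mathcomp Require Import all_boot.
Set Implicit Arguments. Unset Strict Implicit. Unset Printing Implicit Defensive.

(* The poset [1]^n, represented as bool-valued functions on 'I_n
   (false = 0 < true = 1), with the product order. [1]^0 = [0]. *)
Definition cube (n : nat) : finType := {ffun 'I_n -> bool}.

Definition cle (n : nat) (x y : cube n) : bool := [forall i, x i ==> y i].

Definition interval (n : nat) (x z : cube n) : {set cube n} :=
  [set y | cle x y && cle y z].

Definition box_mor (m n : nat) (f : cube m -> cube n) : Prop :=
  (forall x y, cle x y -> cle (f x) (f y)) /\
  (forall x z, cle x z ->
     exists a b, cle a b /\ f @: interval x z = interval a b).

Definition surj (m n : nat) (f : cube m -> cube n) : Prop :=
  forall y, exists x, f x = y.

Definition box_iso (m n : nat) (f : cube m -> cube n) : Prop :=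
  box_mor f /\ exists g : cube n -> cube m,
    box_mor g /\ cancel f g /\ cancel g f.

(* Generalized Reedy structure on boxplus (objects indexed by n, [1]^n),
   given wide subcategories Sm (S^-) and Sp (S^+), described by predicates
   on morphisms, and a degree function deg. *)
Definition gen_reedy_box
  (Sm Sp : forall m n : nat, (cube m -> cube n) -> Prop) (deg : nat -> nat)
  : Prop :=
  (forall n, box_mor (fun x : cube n => x)) /\
  (forall m n p (f : cube m -> cube n) (g : cube n -> cube p),
      box_mor f -> box_mor g -> box_mor (fun x => g (f x))) /\
  (forall n, Sm n n (fun x => x)) /\ (forall n, Sp n n (fun x => x)) /\
  (forall m n (f g : cube m -> cube n), (forall x, f x = g x) ->
      (Sm m n f <-> Sm m n g) /\ (Sp m n f <-> Sp m n g)) /\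
  (forall m n (f : cube m -> cube n), Sm m n f -> box_mor f) /\
  (forall m n (f : cube m -> cube n), Sp m n f -> box_mor f) /\
  (forall m n p (f : cube m -> cube n) (g : cube n -> cube p),
      Sm m n f -> Sm n p g -> Sm m p (fun x => g (f x))) /\
  (forall m n p (f : cube m -> cube n) (g : cube n -> cube p),
      Sp m n f -> Sp n p g -> Sp m p (fun x => g (f x))) /\
  (forall m n (f : cube m -> cube n),
      box_mor f -> ((Sm m n f /\ Sp m n f) <-> box_iso f)) /\
  (forall m n (f : cube m -> cube n), Sm m n f -> deg n <= deg m) /\
  (forall m n (f : cube m -> cube n), Sp m n f -> deg m <= deg n) /\
  (forall m n (f : cube m -> cube n), (Sm m n f \/ Sp m n f) ->
      deg m = deg n -> Sm m n f /\ Sp m n f) /\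
  (forall m n (zeta : cube m -> cube n) (gamma : cube n -> cube n),
      Sm m n zeta -> box_iso gamma -> (forall x, gamma (zeta x) = zeta x) ->
      forall y, gamma y = y) /\
  (forall m n (f : cube m -> cube n), box_mor f ->
      exists k (p : cube m -> cube k) (i : cube k -> cube n),
        Sm m k p /\ Sp k n i /\ forall x, f x = i (p x)) /\
  (forall m n k k' (p : cube m -> cube k) (i : cube k -> cube n)
          (p' : cube m -> cube k') (i' : cube k' -> cube n),
      Sm m k p -> Sp k n i -> Sm m k' p' -> Sp k' n i' ->
      (forall x, i (p x) = i' (p' x)) ->
      exists theta : cube k -> cube k',
        box_iso theta /\ (forall x, theta (p x) = p' x) /\
        (forall y, i' (theta y) = i y)).

From mathcomp Require Import all_boot.
Set Implicit Arguments. Unset Strict Implicit. Unset Printing Implicit Defensive.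

(* The image of [1]^m under a box map f is an interval [a, b]; projecting onto
   the coordinates S where a and b differ and filling the others with a gives
   the factorisation f = fill_a o (proj_S o f) through [1]^|S|.  A surjective
   box map p lifts inequalities (p x1 <= y implies y = p x2 with x1 <= x2), so
   every monotone map constant on the fibres of p descends to a monotone map on
   the codomain of p; this shows both that bijective box maps are isomorphisms
   and that factorisations are unique.  Degrees are compared via
   #|[1]^n| = 2 ^ n. *)

Lemma cleP n (x y : cube n) : reflect (forall i, x i -> y i) (cle x y).
Proof. by apply: (iffP forallP) => H i; [apply/implyP | apply/implyP; apply: H]. Qed.

Lemma cle_refl n (x : cube n) : cle x x.
Proof. by apply/cleP. Qed.

Lemma cle_trans n (x y z : cube n) : cle x y -> cle y z -> cle x z.
Proof. by move=> /cleP h1 /cleP h2; apply/cleP => i /h1 /h2. Qed.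

Lemma in_interval n (x y z : cube n) : (y \in interval x z) = cle x y && cle y z.
Proof. by rewrite inE. Qed.

Definition cube_bot n : cube n := [ffun => false].
Definition cube_top n : cube n := [ffun => true].

Lemma cle_bot n (x : cube n) : cle (cube_bot n) x.
Proof. by apply/cleP => i; rewrite ffunE. Qed.

Lemma cle_top n (x : cube n) : cle x (cube_top n).
Proof. by apply/cleP => i; rewrite ffunE. Qed.

Lemma card_cube n : #|cube n| = 2 ^ n.
Proof. by rewrite card_ffun card_bool card_ord. Qed.

Section BoxMorphisms.

Variables m n p : nat.

Lemma box_mor_mono (f : cube m -> cube n) :
  box_mor f -> forall x y, cle x y -> cle (f x) (f y).
Proof. by case. Qed.

Lemma box_mor_id : box_mor (fun x : cube n => x).
Proof. by split=> // x z xz; exists x, z; rewrite imset_id. Qed.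

Lemma box_mor_comp (f : cube m -> cube n) (g : cube n -> cube p) :
  box_mor f -> box_mor g -> box_mor (fun x => g (f x)).
Proof.
move=> [mf If] [mg Ig]; split=> [x y /mf /mg // | x z xz].
have [a [b [ab Ef]]] := If x z xz; have [c [d [cd Eg]]] := Ig a b ab.
by exists c, d; rewrite imset_comp Ef Eg.
Qed.

Lemma eq_box_mor (f g : cube m -> cube n) : f =1 g -> box_mor f -> box_mor g.
Proof.
move=> fg [mf If]; split=> [x y | x z /If]; first by rewrite -!fg; apply: mf.
by rewrite (eq_imset _ fg).
Qed.

Lemma order_iso_box_mor (f : cube m -> cube n) (g : cube n -> cube m) :
  (forall x y, cle x y -> cle (f x) (f y)) ->
  (forall x y, cle x y -> cle (g x) (g y)) ->
  cancel f g -> cancel g f -> box_mor f.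
Proof.
move=> mf mg fK gK; split=> // x z xz; exists (f x), (f z); split; first exact: mf.
apply/setP => w; rewrite in_interval; apply/imsetP/andP => [[y] | [xw wz]].
  by rewrite in_interval => /andP[xy yz] ->; split; apply: mf.
by exists (g w); rewrite ?gK // in_interval -(fK x) -(fK z) !mg.
Qed.

End BoxMorphisms.

(* [sect f] picks a preimage; the default [cube_bot m] is only returned off the
   range of [f]. *)
Definition sect m n (f : cube m -> cube n) (y : cube n) : cube m :=
  odflt (cube_bot m) [pick x | f x == y].

Section Surjections.

Variables m n : nat.
Implicit Type f : cube m -> cube n.

Lemma eq_surj f g : f =1 g -> surj f -> surj g.
Proof. by move=> fg sf y; have [x <-] := sf y; exists x; rewrite fg. Qed.

Lemma sectK f : surj f -> cancel (sect f) f.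
Proof.
move=> sf y; rewrite /sect; case: pickP => [x /eqP // | nf].
by have [x fx] := sf y; move: (nf x); rewrite fx eqxx.
Qed.

Lemma sect_inj f : surj f -> injective (sect f).
Proof. by move/sectK/can_inj. Qed.

Lemma leq_dim_surj f : surj f -> n <= m.
Proof. by move/sect_inj/leq_card; rewrite !card_cube leq_exp2l. Qed.

Lemma leq_dim_inj f : injective f -> m <= n.
Proof. by move/leq_card; rewrite !card_cube leq_exp2l. Qed.

Lemma surj_box_mor_lift f : box_mor f -> surj f ->
  forall x1 y, cle (f x1) y -> exists2 x2, cle x1 x2 & f x2 = y.
Proof.
move=> [mf If] sf x1 y fx1y.
have [c [d [cd E]]] := If x1 (cube_top m) (cle_top x1).
have fI x : cle x1 x -> cle c (f x) && cle (f x) d.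
  by move=> x1x; rewrite -in_interval -E imset_f // in_interval x1x cle_top.
have /andP[cx1 _] := fI x1 (cle_refl x1).
have /andP[_ ftd] := fI _ (cle_top x1).
have : y \in f @: interval x1 (cube_top m).
  have [z fz] := sf y.
  by rewrite E in_interval (cle_trans cx1) // -fz (cle_trans (mf _ _ (cle_top z))).
by case/imsetP => x2; rewrite in_interval => /andP[x1x2 _] ->; exists x2.
Qed.

Lemma mono_comp_sect p f (q : cube m -> cube p) : box_mor f -> surj f ->
  (forall x y, cle x y -> cle (q x) (q y)) ->
  (forall x y, f x = f y -> q x = q y) ->
  forall y1 y2, cle y1 y2 -> cle (q (sect f y1)) (q (sect f y2)).
Proof.
move=> bf sf mq qf y1 y2 y12.
have [x2 s1x2 fx2] : exists2 x2, cle (sect f y1) x2 & f x2 = y2.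
  by apply: surj_box_mor_lift; rewrite ?sectK.
by rewrite (qf (sect f y2) x2) ?sectK ?fx2 //; apply: mq.
Qed.

Lemma bij_box_iso f : box_mor f -> surj f -> injective f -> box_iso f.
Proof.
move=> bf sf inj_f; split=> //; exists (sect f).
have fK : cancel f (sect f) by move=> x; apply: inj_f; rewrite sectK.
split; last by split; last exact: sectK.
apply: order_iso_box_mor _ (box_mor_mono bf) (sectK sf) fK.
exact: (mono_comp_sect (q := id)).
Qed.

End Surjections.

Lemma surj_comp m n p (f : cube m -> cube n) (g : cube n -> cube p) :
  surj f -> surj g -> surj (fun x => g (f x)).
Proof. by move=> sf sg z; have [y <-] := sg z; have [x <-] := sf y; exists x. Qed.

Lemma box_iso_bij m n (f : cube m -> cube n) : box_iso f -> surj f /\ injective f.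
Proof. by case=> _ [g [_ [fK gK]]]; split; [move=> y; exists (g y) | exact: can_inj fK]. Qed.

Lemma surj_cube_inj n (f : cube n -> cube n) : surj f -> injective f.
Proof.
move=> sf; have [g gK Kg] := injF_bij (sect_inj sf).
by move=> x y fxy; rewrite -(Kg x) -(Kg y) -(sectK sf (g x)) -(sectK sf (g y)) !Kg fxy.
Qed.

Lemma inj_cube_surj n (f : cube n -> cube n) : injective f -> surj f.
Proof. by move=> inj_f y; have [g fK gK] := injF_bij inj_f; exists (g y). Qed.

Section Coordinates.

Variables (n : nat) (S : {set 'I_n}).

Definition sub_coord (t : 'I_#|S|) : 'I_n := enum_val t.

Definition cube_proj (x : cube n) : cube #|S| := [ffun t => x (sub_coord t)].

Definition cube_fill (c : cube n) (w : cube #|S|) : cube n :=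
  [ffun j => c j || [exists t, (sub_coord t == j) && w t]].

Lemma sub_coord_onto j : j \in S -> exists t, sub_coord t = j.
Proof. by move=> jS; exists (enum_rank_in jS j); rewrite /sub_coord enum_rankK_in. Qed.

Lemma cube_fill_coord c w t : cube_fill c w (sub_coord t) = c (sub_coord t) || w t.
Proof.
rewrite ffunE; congr (_ || _); apply/existsP/idP => [[t'] | wt].
  by case/andP => /eqP/enum_val_inj ->.
by exists t; rewrite eqxx.
Qed.

Lemma cube_fill_out c w j : j \notin S -> cube_fill c w j = c j.
Proof.
move=> jS; rewrite ffunE; case: existsP => [[t /andP[/eqP tj _]] | _]; last exact: orbF.
by move: jS; rewrite -tj enum_valP.
Qed.

Lemma cube_proj_mono u v : cle u v -> cle (cube_proj u) (cube_proj v).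
Proof. by move=> /cleP uv; apply/cleP => t; rewrite !ffunE => /uv. Qed.

Lemma cube_fill_mono c u v : cle u v -> cle (cube_fill c u) (cube_fill c v).
Proof.
move=> /cleP uv; apply/cleP => j; rewrite !ffunE => /orP[-> // | /existsP[t]].
by case/andP => tj /uv vt; apply/orP; right; apply/existsP; exists t; rewrite tj.
Qed.

Lemma cube_fill_ge c w : cle c (cube_fill c w).
Proof. by apply/cleP => j cj; rewrite ffunE cj. Qed.

Lemma cube_fill_le c d w : cle c d -> cle w (cube_proj d) -> cle (cube_fill c w) d.
Proof.
move=> /cleP cd /cleP wd; apply/cleP => j; rewrite ffunE => /orP[/cd // | /existsP[t]].
by case/andP => /eqP <- /wd; rewrite ffunE.
Qed.

Lemma cube_proj_fill c w : cle (cube_proj c) w -> cube_proj (cube_fill c w) = w.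
Proof.
move=> /cleP cw; apply/ffunP => t; rewrite ffunE cube_fill_coord.
by case ct: (c _) => //=; rewrite cw // ffunE.
Qed.

Lemma cube_proj_box_mor : box_mor cube_proj.
Proof.
split=> [x y | c d cd]; first exact: cube_proj_mono.
exists (cube_proj c), (cube_proj d); split; first exact: cube_proj_mono.
apply/setP => w; rewrite in_interval; apply/imsetP/andP => [[y] | [cw wd]].
  by rewrite in_interval => /andP[cy yd] ->; rewrite !cube_proj_mono.
by exists (cube_fill c w); rewrite ?cube_proj_fill // in_interval cube_fill_ge cube_fill_le.
Qed.

Section FillOffBase.

Variable c : cube n.
Hypothesis c_off_S : forall t, c (sub_coord t) = false.

Lemma cube_fill_inj : injective (cube_fill c).
Proof.
move=> u v uv; apply/ffunP => t.
by move/(congr1 (fun y : cube n => y (sub_coord t))): uv; rewrite !cube_fill_coord c_off_S.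
Qed.

Lemma cube_fill_box_mor : box_mor (cube_fill c).
Proof.
split=> [u v | u v uv]; first exact: cube_fill_mono.
exists (cube_fill c u), (cube_fill c v); split; first exact: cube_fill_mono.
apply/setP => e; rewrite in_interval; apply/imsetP/andP => [[y] | [/cleP ue /cleP ev]].
  by rewrite in_interval => /andP[uy yv] ->; rewrite !cube_fill_mono.
exists (cube_proj e).
  rewrite in_interval; apply/andP; split; apply/cleP => t; rewrite ffunE.
    by move=> ut; apply: ue; rewrite cube_fill_coord ut orbT.
  by move/ev; rewrite cube_fill_coord c_off_S.
apply/ffunP => j; have [/sub_coord_onto[t <-] | jS] := boolP (j \in S).
  by rewrite cube_fill_coord c_off_S ffunE.
rewrite cube_fill_out //; apply/idP/idP => [ej | cj].
  by move: (ev j ej); rewrite cube_fill_out.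
by apply: ue; rewrite cube_fill_out.
Qed.

End FillOffBase.

End Coordinates.

Arguments cube_proj {n} S x.
Arguments cube_fill {n} S c w.

Definition diff_coords n (a b : cube n) : {set 'I_n} := [set j | a j != b j].

Section DiffCoords.

Variables (n : nat) (a b : cube n).
Hypothesis ab : cle a b.
Let S := diff_coords a b.

Lemma diff_coords_lo (t : 'I_#|S|) : a (sub_coord t) = false.
Proof.
have := enum_valP t; rewrite inE; move/cleP: ab => /(_ (enum_val t)).
by rewrite /sub_coord; case: (a _) (b _) => [] [] // /(_ isT).
Qed.

Lemma diff_coords_hi (t : 'I_#|S|) : b (sub_coord t) = true.
Proof.
have := enum_valP t; rewrite inE; move/cleP: ab => /(_ (enum_val t)).
by rewrite /sub_coord; case: (a _) (b _) => [] [] // /(_ isT).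
Qed.

Lemma cube_fill_projK y : cle a y -> cle y b -> cube_fill S a (cube_proj S y) = y.
Proof.
move=> /cleP ay /cleP yb; apply/ffunP => j; have [/sub_coord_onto[t <-] | jS] := boolP (j \in S).
  by rewrite cube_fill_coord diff_coords_lo ffunE.
rewrite cube_fill_out //; move: jS; rewrite inE negbK => /eqP abj.
by apply/idP/idP => [/ay | /yb]; rewrite ?abj.
Qed.

Lemma cube_fill_diff_coords w : cle a (cube_fill S a w) && cle (cube_fill S a w) b.
Proof.
rewrite cube_fill_ge cube_fill_le //.
by apply/cleP => t _; rewrite ffunE diff_coords_hi.
Qed.

Lemma cube_proj_fill_diff_coords w : cube_proj S (cube_fill S a w) = w.
Proof. by apply: cube_proj_fill; apply/cleP => t; rewrite ffunE diff_coords_lo. Qed.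

End DiffCoords.

Lemma box_mor_factor m n (f : cube m -> cube n) : box_mor f ->
  exists k (p : cube m -> cube k) (i : cube k -> cube n),
    (box_mor p /\ surj p) /\ (box_mor i /\ injective i) /\ forall x, f x = i (p x).
Proof.
move=> bf; have [a [b [ab Ef]]] := bf.2 _ _ (cle_top (cube_bot m)).
have f_range x : cle a (f x) && cle (f x) b.
  by rewrite -in_interval -Ef imset_f // in_interval cle_bot cle_top.
pose S := diff_coords a b.
exists #|S|, (fun x => cube_proj S (f x)), (cube_fill S a).
split; [split | split; [split |]].
- exact: box_mor_comp bf (cube_proj_box_mor _).
- move=> w; have : cube_fill S a w \in f @: interval (cube_bot m) (cube_top m).
    by rewrite Ef in_interval cube_fill_diff_coords.
  by case/imsetP => x _ fx; exists x; rewrite -fx cube_proj_fill_diff_coords.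
- exact/cube_fill_box_mor/diff_coords_lo.
- exact/cube_fill_inj/diff_coords_lo.
- by move=> x; have /andP[ax xb] := f_range x; rewrite cube_fill_projK.
Qed.

Lemma box_factor_unique m n k k' (p : cube m -> cube k) (i : cube k -> cube n)
    (p' : cube m -> cube k') (i' : cube k' -> cube n) :
  box_mor p -> surj p -> injective i -> box_mor p' -> surj p' -> injective i' ->
  (forall x, i (p x) = i' (p' x)) ->
  exists theta : cube k -> cube k',
    box_iso theta /\ (forall x, theta (p x) = p' x) /\ (forall y, i' (theta y) = i y).
Proof.
move=> bp sp inj_i bp' sp' inj_i' E.
have fib x y : p x = p y -> p' x = p' y by move=> pxy; apply: inj_i'; rewrite -!E pxy.
have fib' x y : p' x = p' y -> p x = p y by move=> pxy; apply: inj_i; rewrite !E pxy.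
have thetaK x : p' (sect p (p x)) = p' x by rewrite (fib _ x) ?sectK.
have thetaK' x : p (sect p' (p' x)) = p x by rewrite (fib' _ x) ?sectK.
have mth := mono_comp_sect bp sp (box_mor_mono bp') fib.
have mth' := mono_comp_sect bp' sp' (box_mor_mono bp) fib'.
have c1 : cancel (fun y => p' (sect p y)) (fun y => p (sect p' y)).
  by move=> y; rewrite thetaK' sectK.
have c2 : cancel (fun y => p (sect p' y)) (fun y => p' (sect p y)).
  by move=> y; rewrite thetaK sectK.
exists (fun y => p' (sect p y)); split; [split | split => // y].
- exact: order_iso_box_mor mth mth' c1 c2.
- by exists (fun y => p (sect p' y)); split; first exact: order_iso_box_mor mth' mth c2 c1.
- by rewrite -E sectK.
Qed.

Theorem mainTheorem11 :
  gen_reedy_box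
    (fun m n (f : cube m -> cube n) => box_mor f /\ surj f)
    (fun m n (f : cube m -> cube n) => box_mor f /\ injective f)
    (fun n => n).
Proof.
split; first exact: box_mor_id.
split; first exact: box_mor_comp.
split; first by split; [exact: box_mor_id | move=> y; exists y].
split; first by split; [exact: box_mor_id | by []].
split.
  move=> m n f g fg; have gf := fsym fg; split; split=> -[bf hf]; split;
    first [exact: eq_box_mor _ bf | exact: eq_surj _ hf | exact: eq_inj hf _].
split; first by move=> m n f [].
split; first by move=> m n f [].
split; first by move=> m n p f g [bf sf] [bg sg]; split; [exact: box_mor_comp | exact: surj_comp].
split; first by move=> m n p f g [bf inj_f] [bg inj_g]; split; [exact: box_mor_comp | exact: inj_comp].
split.
  move=> m n f bf; split=> [[[_ sf] [_ inj_f]] | /box_iso_bij[sf inj_f]]; last by [].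
  exact: bij_box_iso.
split; first by move=> m n f [_ /leq_dim_surj].
split; first by move=> m n f [_ /leq_dim_inj].
split.
  move=> m n f Hf /= mn; subst n.
  by case: Hf => -[bf hf]; do 2 split=> //; [exact: surj_cube_inj | exact: inj_cube_surj].
split; first by move=> m n zeta gamma [_ sz] _ gz y; have [x <-] := sz y.
split; first exact: box_mor_factor.
move=> m n k k' p i p' i' [bp sp] [_ inj_i] [bp' sp'] [_ inj_i'].
exact: box_factor_unique.
Qed.
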